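(* Let $(X,d)$ be a compact metric space, $T:X\to X$ a homeomorphism with $F_n(T)<\infty$ for all $n\geqslant1$, and $G$ a finite group acting continuously on $X$ such that $g\circ T=T\circ g$ for all $g\in G$; let $(X',T')$ be the quotient system. Suppose there exists $\eta>0$ with $\limsup_{n\to\infty}\frac1n\log F_n(T)=\eta$. Then \[ \eta\leqslant\limsup_{n\to\infty}\frac1n\log F_n(T')\leqslant\nabla\eta . \]
   Context: The quotient system: $X'=G\backslash X=\{\mathfrak{O}_G(x):x\in X\}$ where $\mathfrak{O}_G(x)=\{g(x):g\in G\}$, with metric $d'(\mathfrak{O}_G(x),\mathfrak{O}_G(y))=\min\{d(x',y'):x'\in\mathfrak{O}_G(x),y'\in\mathfrak{O}_G(y)\}$, and $T'(\mathfrak{O}_G(x))=\mathfrak{O}_G(T(x))$. $F_n(S)=\#\{x:S^n(x)=x\}$. $\nabla=\max\{|\langle g\rangle|:g\in G\}$ is the largest order of an element of $G$. *)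

From HB Require Import structures.
From mathcomp Require Import all_boot all_order all_algebra all_fingroup.
From mathcomp Require Import all_classical all_reals all_analysis.
From mathcomp Require Import finmap.
Set Implicit Arguments. Unset Strict Implicit. Unset Printing Implicit Defensive.
Import Order.TTheory GRing.Theory Num.Theory.
Local Open Scope classical_set_scope.
Local Open Scope ring_scope.
Local Open Scope fset_scope.

(* number of points of a set (meaningful when the set is finite) *)
Definition setcard (T : choiceType) (A : set T) : nat := #|` fset_set A|.

Definition Fix_count (T : choiceType) (S : T -> T) (n : nat) : nat :=
  setcard [set x | iter n S x = x].

Definition orbitG (X : Type) (gT : finGroupType) (G : {group gT})
  (act : X -> gT -> X) (x : X) : set X :=
  [set y | exists2 g, g \in G & y = act x g].

Definition quotient_space (X : Type) (gT : finGroupType) (G : {group gT})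
  (act : X -> gT -> X) : set (set X) :=
  [set O | exists x, O = orbitG G act x].

(* T'(O_G(x)) = O_G(T x), for any representative x of the orbit O *)
Definition quotient_map (X : Type) (gT : finGroupType) (G : {group gT})
  (act : X -> gT -> X) (T : X -> X) (O : set X) : set X :=
  \bigcup_(x in [set x | O = orbitG G act x]) orbitG G act (T x).

Definition Fix_count_quot (X : Type) (gT : finGroupType) (G : {group gT})
  (act : X -> gT -> X) (T : X -> X) (n : nat) : nat :=
  setcard [set O | quotient_space G act O /\ iter n (quotient_map G act T) O = O].

(* limsup_{n->oo} (1/n) log F n, with log 0 = -oo *)
Definition growth (R : realType) (F : nat -> nat) : \bar R :=
  limn_esup (fun n => if F n == 0%N then -oo%E else ((ln (F n)%:R) / n%:R)%:E).

Definition nabla (gT : finGroupType) (G : {group gT}) : nat :=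
  \max_(g in G) #[g]%g.

(** If [T^n x = x] then the orbit of [x] is a fixed point of [T'^n], and an
    orbit has at most [|G|] points, so [F_n(T) <= |G| F_n(T')].  Conversely, if
    the orbit of [x] is fixed by [T'^n] then [T^n x = g x] for some [g] in [G];
    as [T] commutes with [G], [T^(n ord g) x = x], whence
    [F_n(T') <= F_n(T) + F_(2n)(T) + ... + F_(nabla n)(T)].  After taking
    [(1/n) log], the constant factors [|G|] and [nabla] disappear in the limsup,
    while [F_(nk)(T) <= exp (nk (eta + eps))] for large [n] bounds the sum by
    [nabla exp (n nabla (eta + eps))]. *)

From HB Require Import structures.
From mathcomp Require Import all_boot all_order all_algebra all_fingroup.
From mathcomp Require Import all_classical all_reals all_analysis.
From mathcomp Require Import finmap ring lra.
Import Order.TTheory GRing.Theory Num.Theory.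
Set Implicit Arguments. Unset Strict Implicit. Unset Printing Implicit Defensive.
Local Open Scope classical_set_scope.
Local Open Scope ring_scope.

Section SetCard.
Variable Y : choiceType.
Implicit Types A B : set Y.

Lemma setcard0 : setcard (set0 : set Y) = 0%N.
Proof. by rewrite /setcard fset_set0. Qed.

Lemma le_setcard A B : finite_set B -> A `<=` B -> (setcard A <= setcard B)%N.
Proof.
move=> fB AB; have fA := sub_finite_set AB fB.
by rewrite /setcard; apply: fsubset_leq_card; rewrite -fset_set_sub.
Qed.

Lemma setcard_image_le (Z : choiceType) (f : Y -> Z) A :
  finite_set A -> (setcard (f @` A) <= setcard A)%N.
Proof. by move=> fA; rewrite /setcard fset_set_image //; apply: leq_imfset_card. Qed.

Lemma setcardU_le A B : finite_set A -> finite_set B ->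
  (setcard (A `|` B) <= setcard A + setcard B)%N.
Proof. by move=> fA fB; rewrite /setcard fset_setU //; apply: leq_card_fsetU. Qed.

Lemma setcard_bigcup_seq_le (I : choiceType) (s : seq I) (A : I -> set Y) :
  (forall i, i \in s -> finite_set (A i)) ->
  (setcard (\bigcup_(i in [set` s]) A i) <= \sum_(i <- s) setcard (A i))%N.
Proof.
elim: s => [|i s IHs] fA; first by rewrite bigcup_seq big_nil setcard0.
have fAs j : j \in s -> finite_set (A j) by move=> js; apply: fA; rewrite inE js orbT.
rewrite bigcup_seq !big_cons -bigcup_seq.
apply: leq_trans (setcardU_le _ _) _.
- by apply: fA; rewrite mem_head.
- exact: bigcup_finite (finite_seq s) fAs.
by rewrite leq_add2l IHs.
Qed.

End SetCard.

Section Orbits.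
Variables (X : choiceType) (T : X -> X) (gT : finGroupType) (G : {group gT})
  (act : X -> gT -> X).
Hypothesis act1 : forall x, act x 1%g = x.
Hypothesis actM : forall x g h, g \in G -> h \in G -> act (act x g) h = act x (g * h)%g.
Hypothesis T_act : forall g x, g \in G -> T (act x g) = act (T x) g.
Hypothesis finite_periodic : forall n, (1 <= n)%N -> finite_set [set x | iter n T x = x].

Local Notation orbit := (orbitG G act).
Local Notation T' := (quotient_map G act T).

Lemma orbit_refl x : orbit x x.
Proof. by exists 1%g; rewrite ?group1 ?act1. Qed.

Lemma orbit_eq x y : orbit x y -> orbit y = orbit x.
Proof.
case=> g gG ->; apply/seteqP; split => z [h hG ->].
  by exists (g * h)%g; rewrite ?groupM ?actM.
exists (g^-1 * h)%g; first by rewrite groupM ?groupV.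
by rewrite actM ?groupM ?groupV // mulgA mulgV mul1g.
Qed.

Lemma quotient_map_orbit x : T' (orbit x) = orbit (T x).
Proof.
apply/seteqP; split => [z [x' /= xx' zO]|z zO]; last by exists x.
have [g gG ->] : orbit x' x by rewrite -xx'; apply: orbit_refl.
by rewrite T_act // (@orbit_eq (T x')) //; exists g.
Qed.

Lemma iter_quotient_map_orbit n x : iter n T' (orbit x) = orbit (iter n T x).
Proof. by elim: n => //= n ->; rewrite quotient_map_orbit. Qed.

Lemma iter_act n x g : g \in G -> iter n T (act x g) = act (iter n T x) g.
Proof. by move=> gG; elim: n => //= n ->; rewrite T_act. Qed.

Lemma iter_mul_expg n x g : g \in G -> iter n T x = act x g ->
  forall k, iter (n * k) T x = act x (g ^+ k)%g.
Proof.
move=> gG Tnx; elim=> [|k IHk]; first by rewrite muln0 expg0 act1.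
by rewrite mulnS iterD IHk iter_act ?groupX // Tnx actM ?groupX // expgS.
Qed.

Lemma order_le_nabla g : g \in G -> (#[g]%g <= nabla G)%N.
Proof. exact: (leq_bigmax_cond (F := fun g => #[g]%g)). Qed.

Lemma nabla_gt0 : (0 < nabla G)%N.
Proof. exact: leq_trans (order_gt0 1%g) (order_le_nabla (group1 G)). Qed.

Definition quotient_periodic n :=
  [set O | quotient_space G act O /\ iter n T' O = O].

Definition periodic_multiples n :=
  \bigcup_(k in [set` index_iota 1 (nabla G).+1]) [set x | iter (n * k) T x = x].

Lemma quotient_periodic_sub n :
  quotient_periodic n `<=` orbit @` periodic_multiples n.
Proof.
move=> _ [[x ->]]; rewrite iter_quotient_map_orbit => Tnx; exists x => //.
have [g gG Tnxg] : orbit x (iter n T x) by rewrite -Tnx; apply: orbit_refl.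
exists #[g]%g; first by rewrite /= mem_index_iota order_gt0 ltnS order_le_nabla.
by rewrite /= (iter_mul_expg gG Tnxg) expg_order act1.
Qed.

Lemma finite_periodic_multiples n :
  (1 <= n)%N -> finite_set (periodic_multiples n).
Proof.
move=> n1; apply: bigcup_finite => [|k]; first exact: finite_seq.
by rewrite /= mem_index_iota => /andP[k1 _]; apply: finite_periodic; rewrite muln_gt0 n1.
Qed.

Lemma finite_quotient_periodic n : (1 <= n)%N -> finite_set (quotient_periodic n).
Proof.
move=> n1; apply: sub_finite_set (@quotient_periodic_sub n) _.
exact/finite_image/finite_periodic_multiples.
Qed.

Lemma Fix_count_quot_le n : (1 <= n)%N ->
  (Fix_count_quot G act T n <= \sum_(1 <= k < (nabla G).+1) Fix_count T (n * k))%N.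
Proof.
move=> n1; have fP := finite_periodic_multiples n1.
apply: leq_trans (le_setcard (finite_image _ fP) (@quotient_periodic_sub n)) _.
apply: leq_trans (setcard_image_le _ fP) _.
apply: setcard_bigcup_seq_le => k; rewrite mem_index_iota => /andP[k1 _].
by apply: finite_periodic; rewrite muln_gt0 n1.
Qed.

(* [x] is recovered as [g] applied to a chosen representative of its orbit. *)
Lemma Fix_count_le n : (1 <= n)%N ->
  (Fix_count T n <= #|G| * Fix_count_quot G act T n)%N.
Proof.
move=> n1; have fQ := finite_quotient_periodic n1.
have [E|/set0P[x0 _]] := eqVneq [set x | iter n T x = x] set0.
  by rewrite /Fix_count E setcard0.
pose rep O := xget x0 O.
pose translates g := (fun O => act (rep O) g) @` quotient_periodic n.
have periodic_sub : [set x | iter n T x = x] `<=` \bigcup_(g in [set` enum G]) translates g.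
  move=> x Tnx; pose O := orbit x.
  have OQ : quotient_periodic n O by split; [exists x|rewrite iter_quotient_map_orbit Tnx].
  have repO : O (rep O) by apply: xgetPex; exists x; apply: orbit_refl.
  have [g gG xg] : orbit (rep O) x by rewrite (orbit_eq repO); apply: orbit_refl.
  by exists g; [rewrite /= mem_enum | exists O].
apply: leq_trans (le_setcard _ periodic_sub) _.
  by apply: bigcup_finite => [|g _]; [exact: finite_seq|exact: finite_image].
apply: leq_trans (setcard_bigcup_seq_le _) _ => [g _|]; first exact: finite_image.
rewrite big_enum /= -sum_nat_const; apply: leq_sum => g _.
exact: setcard_image_le.
Qed.

End Orbits.

Section LimSup.
Local Open Scope ereal_scope.
Context {R : realType}.
Implicit Types u v : (\bar R)^nat.

Lemma limn_esup_le_eventually u (b : \bar R) N :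
  (forall n, (N <= n)%N -> u n <= b) -> limn_esup u <= b.
Proof.
move=> ub; apply: (@le_trans _ _ (ereal_sup (u @` [set n | (N <= n)%N]))).
  by apply: ereal_inf_lbound; exists [set n | (N <= n)%N] => //; exists N.
by apply: ge_ereal_sup => _ [n Nn <-]; exact: ub.
Qed.

Lemma limn_esup_lt_eventually u (b : \bar R) :
  limn_esup u < b -> exists N, forall n, (N <= n)%N -> u n < b.
Proof.
case/ereal_inf_lt => _ [V [N _ NV] <-] Vb; exists N => n Nn.
by apply: le_lt_trans Vb; apply: ereal_sup_ubound; exists n => //; exact: NV.
Qed.

Lemma le_limn_esup u v :
  (forall e : R, (0 < e)%R -> exists N, forall n, (N <= n)%N -> u n <= v n + e%:E) ->
  limn_esup u <= limn_esup v.
Proof.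
move=> uv; apply: le_ereal_inf_tmp => _ [V [M _ MV] <-].
apply/lee_addgt0Pr => e e0; have [N uvN] := uv e e0.
apply: limn_esup_le_eventually (maxn M N) _ => n; rewrite geq_max => /andP[Mn Nn].
apply: le_trans (uvN n Nn) _; rewrite leeD2r //.
by apply: ereal_sup_ubound; exists n => //; apply: MV.
Qed.

End LimSup.

Section Growth.
Context {R : realType}.
Implicit Types (F H : nat -> nat) (a c e : R).

Definition log_rate F n : \bar R :=
  if F n == 0%N then -oo%E else (ln (F n)%:R / n%:R)%:E.

Lemma growthE F : growth R F = limn_esup (log_rate F).
Proof. by []. Qed.

Lemma eventually_div_natr_le c e : 0 < e ->
  exists N, forall n, (N <= n)%N -> c / n%:R <= e.
Proof.
move=> e0; exists (Num.Def.truncn (c / e)).+1 => n cen.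
have n0 : 0 < n%:R :> R by rewrite ltr0n (leq_trans _ cen).
have : c / e < n%:R by apply: lt_le_trans (truncnS_gt _) _; rewrite ler_nat.
by rewrite ler_pdivrMr // ltr_pdivrMr // mulrC => /ltW.
Qed.

Lemma log_rate_le_mul F H (C n : nat) : (0 < n)%N -> (0 < C)%N ->
  (F n <= C * H n)%N -> (log_rate F n <= log_rate H n + (ln C%:R / n%:R)%:E)%E.
Proof.
move=> n0 C0 FCH; rewrite /log_rate; have [_|Fn0] := eqVneq (F n) 0%N; first exact: leNye.
have Hn0 : H n != 0%N by apply: contra_neq Fn0 => Hn0; move: FCH; rewrite Hn0 muln0 leqn0 => /eqP.
rewrite (negbTE Hn0) -EFinD lee_fin -mulrDl ler_wpM2r ?invr_ge0 ?ler0n // addrC.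
have [C0R Hn0R] : 0 < C%:R :> R /\ 0 < (H n)%:R :> R by split; rewrite ltr0n // lt0n.
rewrite -lnM ?posrE // ler_ln ?posrE ?mulr_gt0 // ?ltr0n ?lt0n //.
by rewrite -natrM ler_nat.
Qed.

Lemma log_rate_le_expR H c a n : (0 < n)%N -> 0 < c ->
  (H n)%:R <= c * expR (n%:R * a) -> (log_rate H n <= (ln c / n%:R + a)%:E)%E.
Proof.
move=> n0 c0 Hbound; rewrite /log_rate; have [_|Hn0] := eqVneq (H n) 0%N; first exact: leNye.
have n0R : 0 < n%:R :> R by rewrite ltr0n.
rewrite lee_fin ler_pdivrMr // mulrDl divfK ?gt_eqF // [a * _]mulrC.
rewrite -[n%:R * a]expRK -lnM ?posrE ?expR_gt0 //.
by rewrite ler_ln ?posrE ?mulr_gt0 ?expR_gt0 ?ltr0n ?lt0n.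
Qed.

Lemma growth_lt_expR_bound F a : (growth R F < a%:E)%E ->
  exists N, forall m, (N <= m)%N -> (F m)%:R <= expR (m%:R * a).
Proof.
rewrite growthE => /limn_esup_lt_eventually[N Fa]; exists (maxn N 1) => m.
rewrite geq_max => /andP[Nm m1]; have m0 : 0 < m%:R :> R by rewrite ltr0n.
move: (Fa m Nm); rewrite /log_rate; have [->|Fm0] := eqVneq (F m) 0%N.
  by rewrite expR_ge0.
rewrite lte_fin ltr_pdivrMr // -ler_ln ?posrE ?expR_gt0 ?ltr0n ?lt0n // expRK mulrC.
exact: ltW.
Qed.

Lemma growth_le_of_le_mul F H (C : nat) : (0 < C)%N ->
  (forall n, (1 <= n)%N -> (F n <= C * H n)%N) -> (growth R F <= growth R H)%E.
Proof.
move=> C0 FCH; rewrite !growthE; apply: le_limn_esup => e e0.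
have [N lnCe] := eventually_div_natr_le (ln C%:R) e0.
exists (maxn N 1) => n; rewrite geq_max => /andP[Nn n1].
apply: le_trans (log_rate_le_mul n1 C0 (FCH n n1)) _.
by rewrite leeD2l // lee_fin lnCe.
Qed.

Lemma growth_le_of_le_sum_dilations F H (D : nat) (eta : R) :
  (0 < D)%N -> 0 <= eta ->
  (forall n, (1 <= n)%N -> (H n <= \sum_(1 <= k < D.+1) F (n * k))%N) ->
  growth R F = eta%:E -> (growth R H <= D%:R%:E * eta%:E)%E.
Proof.
move=> D0 eta0 HF growthF; rewrite -EFinM; apply/lee_addgt0Pr => e e0.
have D0R : 0 < D%:R :> R by rewrite ltr0n.
pose d := e / (2 * D%:R).
have d0 : 0 < d by rewrite divr_gt0 ?mulr_gt0.
have Dd : D%:R * d = e / 2 by rewrite /d; field; rewrite gt_eqF.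
have [N Fbound] : exists N, forall m, (N <= m)%N -> (F m)%:R <= expR (m%:R * (eta + d)).
  by apply: growth_lt_expR_bound; rewrite growthF lte_fin ltrDl.
have [N' lnDe] := eventually_div_natr_le (ln D%:R) (divr_gt0 e0 (ltr0n R 2)).
rewrite -EFinD; apply: (limn_esup_le_eventually (N := maxn (maxn N N') 1)) => n.
rewrite !geq_max => /andP[/andP[Nn N'n] n1].
have Hbound : (H n)%:R <= D%:R * expR (n%:R * (D%:R * (eta + d))).
  apply: le_trans (_ : (\sum_(1 <= k < D.+1) F (n * k))%:R <= _); first by rewrite ler_nat HF.
  rewrite -sumrMnr -[D in D%:R * _](subn1 D.+1) mulr_natl -sumr_const_nat.
  apply: ler_sum_nat => k /andP[k1 kD]; apply: le_trans (Fbound _ _) _.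
    by rewrite (leq_trans Nn) // leq_pmulr.
  rewrite ler_expR mulrA -natrM; apply: ler_wpM2r; first by rewrite addr_ge0 // ltW.
  by rewrite ler_nat leq_mul2l -ltnS kD orbT.
apply: le_trans (log_rate_le_expR n1 D0R Hbound) _.
rewrite lee_fin mulrDr Dd; have := lnDe n N'n; lra.
Qed.

End Growth.

Theorem corollary9 (R : realType) (X : metricType R) (T Tinv : X -> X)
  (gT : finGroupType) (G : {group gT}) (act : X -> gT -> X) (eta : R) :
  compact [set: X] ->
  continuous T -> continuous Tinv -> cancel T Tinv -> cancel Tinv T ->
  (forall n : nat, (1 <= n)%N -> finite_set [set x : X | iter n T x = x]) ->
  (forall x, act x 1%g = x) ->
  (forall x g h, g \in G -> h \in G -> act (act x g) h = act x (g * h)%g) ->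
  (forall g, g \in G -> continuous (act^~ g)) ->
  (forall g x, g \in G -> T (act x g) = act (T x) g) ->
  0 < eta ->
  growth R (Fix_count T) = eta%:E ->
  (eta%:E <= growth R (Fix_count_quot G act T) <= (nabla G)%:R%:E * eta%:E)%E.
Proof.
move=> _ _ _ _ _ finite_periodic act1 actM _ T_act eta0 growthT.
apply/andP; split.
  rewrite -growthT; apply: (growth_le_of_le_mul (cardG_gt0 G)) => n n1.
  exact: Fix_count_le.
apply: growth_le_of_le_sum_dilations growthT => //; first exact: nabla_gt0.
  exact: ltW.
by move=> n n1; apply: Fix_count_quot_le.
Qed.
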